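(* Let $k[X,Y]$ be the polynomial ring over a field $k$, let $\ell\ge 3$, and set $R = k[X,Y]/(Y^\ell)$, with $x,y$ the images of $X,Y$ in $R$; let $D = k[x] \subseteq R$. For each integer $n>0$ let $z_n = y/x^n \in \mathrm{Q}(R)$ and $S_n = D[z_n]$. Then $R \subseteq S_n \subseteq \overline R$, and the strict closure $R^*$ of $R$ in $S_n$ equals $$R^* = R + D\frac{y^2}{x^n} + D\frac{y^3}{x^{2n}} + \cdots + D\frac{y^{\ell-1}}{x^{(\ell-2)n}}.$$
   Context: $\mathrm{Q}(R)$ denotes the total ring of fractions of $R$ (here $x$ is a non-zerodivisor of $R$) and $\overline R$ the integral closure of $R$ in $\mathrm{Q}(R)$. For an extension of commutative rings $R \subseteq S$, the strict closure of $R$ in $S$ is $R^* = \{\alpha \in S \mid \alpha\otimes 1 = 1\otimes \alpha \text{ in } S\otimes_R S\}$. *)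

From HB Require Import structures.
From mathcomp Require Import all_boot all_order all_algebra.
Set Implicit Arguments. Unset Strict Implicit. Unset Printing Implicit Defensive.
Import Order.TTheory GRing.Theory Num.Theory.
Local Open Scope ring_scope.

(* Evaluation of a bivariate polynomial P in k[X][Y] ({poly {poly k}}, the
   outer variable being Y) at the point (a, b) of a commutative k-algebra A. *)
Definition evalXY (k : fieldType) (A : comUnitAlgType k) (a b : A)
    (P : {poly {poly k}}) : A :=
  (map_poly (fun p : {poly k} => (map_poly (in_alg A) p).[a]) P).[b].

(* k[a][b] : the image of k[X,Y] under X |-> a, Y |-> b. *)
Definition gen2 (k : fieldType) (A : comUnitAlgType k) (a b : A) (q : A) : Prop :=
  exists P : {poly {poly k}}, evalXY a b P = q.

Definition gen1 (k : fieldType) (A : comUnitAlgType k) (a : A) (q : A) : Prop :=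
  exists p : {poly k}, (map_poly (in_alg A) p).[a] = q.

Definition nzd_in (A : comUnitRingType) (R : A -> Prop) (s : A) : Prop :=
  R s /\ forall r, R r -> s * r = 0 -> r = 0.

Definition is_total_quotient_ring (A : comUnitRingType) (R : A -> Prop) : Prop :=
  (forall s, nzd_in R s -> s \is a GRing.unit) /\
  (forall q, exists r s, R r /\ nzd_in R s /\ q = r / s).

Definition integral_over (A : comUnitRingType) (R : A -> Prop) (alpha : A) : Prop :=
  exists p : {poly A}, p \is monic /\ (forall i, R p`_i) /\ root p alpha.

Definition rhom_on (A : comUnitRingType) (S : A -> Prop) (T : comPzRingType)
    (f : A -> T) : Prop :=
  f 1 = 1 /\
  forall a b, S a -> S b -> f (a + b) = f a + f b /\ f (a * b) = f a * f b.

(* Strict closure of R in S:  alpha (x) 1 = 1 (x) alpha in S (x)_R S.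
   S (x)_R S is the pushout of S <- R -> S in commutative rings; by its
   universal property, alpha (x) 1 = 1 (x) alpha iff every pair of ring maps
   S -> T agreeing on R agrees on alpha. *)
Definition strict_closure (A : comUnitRingType) (R S : A -> Prop) (alpha : A) : Prop :=
  S alpha /\
  forall (T : comPzRingType) (f g : A -> T),
    rhom_on S f -> rhom_on S g -> (forall r, R r -> f r = g r) -> f alpha = g alpha.

From HB Require Import structures.
From mathcomp Require Import all_boot all_order all_algebra.
From mathcomp Require Import ring.
From Stdlib Require Import ClassicalEpsilon.
Set Implicit Arguments.
Unset Strict Implicit.
Unset Printing Implicit Defensive.
Import GRing.Theory.
Local Open Scope ring_scope.

(* Since x is a unit, y = x^n z and z^l = 0, the map P |-> P(x, z) still has
   kernel (Y^l), and every element of S = k[x, z] is c(x) + z w with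
   (z w)^l = 0, hence integral over R.  The elements y z^j lie in R*, since
   y z (x) 1 = z (x) y = z (x) x^n z = x^n z (x) z = y (x) z = 1 (x) y z,
   then induction on j.
   Conversely the two maps S -> k[X, Y]/(X^n, Y^l) sending P(x, z) to P and
   to P(X, 0) agree on R = k[x, x^n z]; so if P(x, z) lies in R*, then X^n
   divides the coefficients P_j for 0 < j < l, and P(x, z) is in the
   right-hand side. *)

Section QuotientByXn.
Variable R : comNzRingType.

Lemma take_poly_eq0 m (p : {poly R}) :
  (forall j, (j < m)%N -> p`_j = 0) -> take_poly m p = 0.
Proof.
by move=> p_lt; apply/polyP => j; rewrite coef_take_poly coef0; case: ltnP => // /p_lt.
Qed.

Lemma in_qpolyXnE m (p : {poly R}) :
  (0 < m)%N -> in_qpoly 'X^m p = take_poly m p :> {poly R}.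
Proof.
by move=> m_gt0; rewrite /in_qpoly /= mk_monic_Xn prednK // Pdiv.RingMonic.take_poly_rmodp.
Qed.

Lemma in_qpolyXn_id m : (0 < m)%N -> in_qpoly 'X^m ('X^m : {poly R}) = 0.
Proof.
move=> m_gt0; apply: val_inj.
by rewrite [LHS]in_qpolyXnE // -['X^m]mul1r take_polyMXn_0.
Qed.

End QuotientByXn.

Section RingMapsOnImage.
Variables (B : comPzRingType) (A : comUnitRingType) (phi : {rmorphism B -> A}).
Let S (q : A) := exists P, phi P = q.

Lemma imageD a b : S a -> S b -> S (a + b).
Proof. by move=> [P <-] [P' <-]; exists (P + P'); rewrite rmorphD. Qed.

Lemma imageM a b : S a -> S b -> S (a * b).
Proof. by move=> [P <-] [P' <-]; exists (P * P'); rewrite rmorphM. Qed.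

Lemma image_exp a m : S a -> S (a ^+ m).
Proof. by move=> [P <-]; exists (P ^+ m); rewrite rmorphXn. Qed.

Section RhomOn.
Variables (T : comPzRingType) (f : A -> T).
Hypothesis f_rhom : rhom_on S f.

Lemma rhom_onD a b : S a -> S b -> f (a + b) = f a + f b.
Proof. by move=> Sa Sb; have [] := f_rhom.2 a b Sa Sb. Qed.

Lemma rhom_onM a b : S a -> S b -> f (a * b) = f a * f b.
Proof. by move=> Sa Sb; have [] := f_rhom.2 a b Sa Sb. Qed.

Lemma rhom_on0 : f 0 = 0.
Proof.
have S0 : S 0 by exists 0; rewrite rmorph0.
by apply: (@addrI _ (f 0)); rewrite -rhom_onD // !addr0.
Qed.

Lemma rhom_on_exp a m : S a -> f (a ^+ m) = f a ^+ m.
Proof.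
move=> Sa; elim: m => [|m IHm]; first by rewrite !expr0 f_rhom.1.
by rewrite !exprS rhom_onM ?IHm //; apply: image_exp.
Qed.

End RhomOn.

Section StrictClosureRing.
Variable R : A -> Prop.
Hypothesis sub_RS : forall r, R r -> S r.

Lemma strict_closure_base r : R r -> strict_closure R S r.
Proof. by move=> Rr; split; [apply: sub_RS | move=> T f g _ _; apply]. Qed.

Lemma strict_closureD a b :
  strict_closure R S a -> strict_closure R S b -> strict_closure R S (a + b).
Proof.
move=> [Sa fga] [Sb fgb]; split=> [|T f g hf hg fg]; first exact: imageD.
by rewrite (rhom_onD hf) // (rhom_onD hg) // (fga _ f g) // (fgb _ f g).
Qed.

Lemma strict_closureM a b :
  strict_closure R S a -> strict_closure R S b -> strict_closure R S (a * b).
Proof.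
move=> [Sa fga] [Sb fgb]; split=> [|T f g hf hg fg]; first exact: imageM.
by rewrite (rhom_onM hf) // (rhom_onM hg) // (fga _ f g) // (fgb _ f g).
Qed.

Lemma strict_closure_sum (I : Type) (r : seq I) (F : I -> A) :
  (forall i, strict_closure R S (F i)) -> strict_closure R S (\sum_(i <- r) F i).
Proof.
move=> RF; elim: r => [|i r IHr]; last by rewrite big_cons; apply: strict_closureD.
rewrite big_nil; split=> [|T f g hf hg _]; first by exists 0; rewrite rmorph0.
by rewrite (rhom_on0 hf) (rhom_on0 hg).
Qed.

End StrictClosureRing.

Section Descend.
Variables (T : comPzRingType) (F : {rmorphism B -> T}).
Hypothesis ker_sub : forall P, phi P = 0 -> F P = 0.

Definition descend (q : A) : T := F (epsilon (inhabits 0) (fun P => phi P = q)).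

Lemma descendE P : descend (phi P) = F P.
Proof.
have phiP : phi (epsilon (inhabits 0) (fun P' => phi P' = phi P)) = phi P.
  by apply: (epsilon_spec (inhabits 0) (fun P' => phi P' = phi P)); exists P.
by apply/eqP; rewrite -subr_eq0 -rmorphB ker_sub // rmorphB phiP subrr.
Qed.

Lemma rhom_on_descend : rhom_on S descend.
Proof.
split=> [|_ _ [P <-] [P' <-]]; first by rewrite -(rmorph1 phi) descendE rmorph1.
by rewrite -rmorphD -rmorphM !descendE rmorphD rmorphM.
Qed.

End Descend.

End RingMapsOnImage.

Section Evaluation.
Variables (k : fieldType) (Q : comUnitAlgType k).
Implicit Types P : {poly {poly k}}.

Definition evXY (a b : Q) : {rmorphism {poly {poly k}} -> Q} :=
  horner_eval b \o map_poly (horner_alg a).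

Lemma evalXYE a b P : evalXY a b P = evXY a b P.
Proof. by []. Qed.

Lemma evXYE a b P : evXY a b P = (map_poly (horner_alg a) P).[b].
Proof. by []. Qed.

Lemma evXYC a b c : evXY a b c%:P = horner_alg a c.
Proof. by rewrite evXYE map_polyC hornerC. Qed.

Lemma evXYX a b : evXY a b 'X = b.
Proof. by rewrite evXYE map_polyX hornerX. Qed.

Lemma evXY_sum a b P N : (size P <= N)%N ->
  evXY a b P = \sum_(i < N) horner_alg a P`_i * b ^+ i.
Proof.
move=> size_P; rewrite evXYE (horner_coef_wide _ (leq_trans (size_poly _ _) size_P)).
by apply: eq_bigr => i _; rewrite coef_map.
Qed.

Lemma evXY_comp a b P W : evXY a b (P \Po W) = evXY a (evXY a b W) P.
Proof. by rewrite !evXYE map_comp_poly horner_comp. Qed.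

End Evaluation.

Section Truncation.
Variables (k : fieldType) (n l : nat).
Hypotheses (n_gt0 : (0 < n)%N) (l_gt0 : (0 < l)%N).

Local Notation kXn := {poly %/ ('X^n : {poly k})}.
Implicit Types P : {poly {poly k}}.

Definition trunc : {rmorphism {poly {poly k}} -> {poly %/ ('X^l : {poly kXn})}} :=
  in_qpoly 'X^l \o map_poly (in_qpoly 'X^n).

Definition trunc0 : {rmorphism {poly {poly k}} -> {poly %/ ('X^l : {poly kXn})}} :=
  trunc \o (polyC \o horner_eval 0).

Lemma truncE P : trunc P = in_qpoly 'X^l (map_poly (in_qpoly 'X^n) P).
Proof. by []. Qed.

Lemma trunc0E P : trunc0 P = trunc (P.[0])%:P.
Proof. by []. Qed.

Lemma trunc_coef P j : (j < l)%N ->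
  ((trunc P : {poly kXn})`_j : {poly k}) = take_poly n P`_j.
Proof.
move=> j_lt; rewrite truncE in_qpolyXnE // coef_take_poly j_lt coef_map.
by rewrite in_qpolyXnE.
Qed.

Lemma trunc_XnC : trunc ('X^n)%:P = 0.
Proof. by rewrite truncE map_polyC /= in_qpolyXn_id // polyC0 rmorph0. Qed.

Lemma trunc_eq0 P : (forall j, (j < l)%N -> P`_j = 0) -> trunc P = 0.
Proof.
move=> P_lt; rewrite -(poly_take_drop l P) take_poly_eq0 // add0r rmorphM.
by rewrite [trunc 'X^l]truncE map_polyXn in_qpolyXn_id // mulr0.
Qed.

Lemma trunc0_eq0 P : P`_0 = 0 -> trunc0 P = 0.
Proof. by move=> P0; rewrite trunc0E horner_coef0 P0 polyC0 rmorph0. Qed.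

(* X^n Y is killed by trunc, and P(X, X^n Y) = P(X, 0) + X^n Y W. *)
Lemma trunc_compXnX P : trunc (P \Po ('X^n%:P * 'X)) = trunc0 (P \Po ('X^n%:P * 'X)).
Proof.
rewrite trunc0E horner_comp hornerM hornerC hornerX mulr0.
have [W PW] : exists W, P - (P.[0])%:P = W * ('X - 0%:P).
  by apply/factor_theorem; rewrite rootE !hornerE subrr.
rewrite -{1}(subrK (P.[0])%:P P) PW polyC0 subr0 comp_polyD comp_polyM comp_polyX comp_polyC.
by rewrite rmorphD !rmorphM trunc_XnC mul0r mulr0 add0r.
Qed.

Lemma trunc_eq_trunc0 P : trunc P = trunc0 P ->
  forall j, (0 < j < l)%N -> take_poly n P`_j = 0.
Proof.
move=> PP0 j /andP[j_gt0 j_lt].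
by rewrite -trunc_coef // PP0 trunc0E trunc_coef // coefC (gtn_eqF j_gt0) take_poly0r.
Qed.

End Truncation.

Section StrictClosureOfTruncatedPlane.
Variables (k : fieldType) (Q : comUnitAlgType k) (x y : Q) (l n : nat).
Hypotheses (l_ge3 : (3 <= l)%N) (n_gt0 : (0 < n)%N).
Hypothesis ker_evalXY : forall P : {poly {poly k}},
  evalXY x y P = 0 <-> exists P0 : {poly {poly k}}, P = P0 * 'X^l.
Hypothesis Q_total : is_total_quotient_ring (gen2 x y).
Implicit Types P : {poly {poly k}}.

Let z := y / x ^+ n.
Let R (q : Q) := exists P, evXY x y P = q.
Let S (q : Q) := exists P, evXY x z P = q.

Let l_gt0 : (0 < l)%N. Proof. exact: leq_trans l_ge3. Qed.
Let l_gt1 : (1 < l)%N. Proof. exact: leq_trans l_ge3. Qed.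

Lemma evXY_eq0 P : evXY x y P = 0 <-> forall j, (j < l)%N -> P`_j = 0.
Proof.
rewrite -evalXYE ker_evalXY; split=> [[P0 ->] j j_lt | P_lt]; first by rewrite coefMXn j_lt.
by exists (drop_poly l P); rewrite -{1}(poly_take_drop l P) take_poly_eq0 ?add0r.
Qed.

Lemma x_unit : x \is a GRing.unit.
Proof.
have xE : x = evXY x y 'X%:P by rewrite evXYC horner_algX.
apply: Q_total.1; split=> [|_ [P <-]]; first by exists 'X%:P.
rewrite evalXYE {1}xE -rmorphM => /evXY_eq0 XP_lt; apply/evXY_eq0 => j /XP_lt/eqP.
by rewrite coefCM mulf_eq0 polyX_eq0 => /eqP.
Qed.

Lemma y_exp_l : y ^+ l = 0.
Proof.
have /evXY_eq0 : forall j, (j < l)%N -> ('X^l : {poly {poly k}})`_j = 0.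
  by move=> j j_lt; rewrite coefXn ltn_eqF.
by rewrite rmorphXn evXYX.
Qed.

Lemma y_eq : y = x ^+ n * z.
Proof. by rewrite /z mulrC divrK // unitrX // x_unit. Qed.

Lemma z_exp_eq0 i : (l <= i)%N -> z ^+ i = 0.
Proof. by move=> l_le; rewrite /z exprMn -(subnKC l_le) exprD y_exp_l !mul0r. Qed.

(* Homogenize: x^(nN) P(x, z) = P'(x, y) with P'_i = X^(n(N-i)) P_i. *)
Lemma evXYz_eq0 P : evXY x z P = 0 -> forall j, (j < l)%N -> P`_j = 0.
Proof.
move=> Pz0 j j_lt; set N := size P.
have [j_ltN|] := ltnP j N; last by move=> ?; rewrite nth_default.
pose P' := \poly_(i < N) (P`_i * 'X^(n * (N - i))).
have P'y : evXY x y P' = x ^+ (n * N) * evXY x z P.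
  rewrite (evXY_sum _ _ (size_poly _ _)) (evXY_sum _ _ (leqnn N)) mulr_sumr.
  apply: eq_bigr => i _; rewrite coef_poly ltn_ord rmorphM rmorphXn /= horner_algX.
  have -> : (n * N = n * (N - i) + n * i)%N by rewrite -mulnDr subnK // ltnW.
  by rewrite y_eq exprMn -exprM exprD; ring.
have /evXY_eq0/(_ j j_lt)/eqP : evXY x y P' = 0 by rewrite P'y Pz0 mulr0.
by rewrite coef_poly j_ltN mulf_eq0 expf_eq0 polyX_eq0 andbF orbF => /eqP.
Qed.

Lemma evXY_compXnX P : evXY x z (P \Po ('X^n%:P * 'X)) = evXY x y P.
Proof. by rewrite evXY_comp rmorphM evXYX evXYC rmorphXn /= horner_algX -y_eq. Qed.

Lemma R_sub_S q : R q -> S q.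
Proof. by case=> P <-; exists (P \Po ('X^n%:P * 'X)); rewrite evXY_compXnX. Qed.

Lemma S_integral q : S q -> integral_over R q.
Proof.
case=> P <-; set c := P`_0.
have [W PW] : exists W, P - c%:P = W * ('X - 0%:P).
  by apply/factor_theorem; rewrite rootE !hornerE horner_coef0 subrr.
exists (map_poly (evXY x y) (('X - (c%:P)%:P) ^+ l)); split.
  by rewrite rmorphXn /= map_polyXsubC monic_exp // monicXsubC.
split=> [i|]; first by rewrite coef_map; eexists.
rewrite /root rmorphXn /= map_polyXsubC horner_exp hornerXsubC.
have -> : evXY x z P - evXY x y c%:P = evXY x z W * z.
  by rewrite evXYC -(evXYC x z) -rmorphB PW rmorphM rmorphB evXYX evXYC rmorph0 subr0.
by rewrite exprMn z_exp_eq0 // mulr0.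
Qed.

Lemma y_exp_div_x_exp i : (0 < i)%N -> y ^+ i / x ^+ ((i - 1) * n) = y * z ^+ (i - 1).
Proof.
case: i => // i _; rewrite subn1 /= exprS -mulrA; congr (y * _).
by rewrite {1}y_eq exprMn mulnC exprM mulrAC divrr ?mul1r // !unitrX // x_unit.
Qed.

Lemma strict_closure_yz_exp j : strict_closure R S (y * z ^+ j).
Proof.
have Ry : R y by exists 'X; rewrite evXYX.
have Rxn : R (x ^+ n) by exists ('X^n)%:P; rewrite evXYC rmorphXn /= horner_algX.
have Sz : S z by exists 'X; rewrite evXYX.
have Sy := R_sub_S Ry; have Sxn := R_sub_S Rxn.
split=> [|T f g hf hg fg]; first by apply: imageM => //; apply: image_exp.
have fy := fg y Ry.
have yE (h : Q -> T) : rhom_on S h -> h y = h (x ^+ n) * h z.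
  by move=> hh; rewrite {1}y_eq (rhom_onM hh).
have fyz : f y * f z = g y * g z.
  have : f y * g z = f y * f z.
    by rewrite {1}(yE f hf) (fg _ Rxn) mulrAC -(yE g hg) -fy.
  by move=> <-; rewrite fy.
rewrite (rhom_onM hf) ?(rhom_onM hg) ?(rhom_on_exp hf) ?(rhom_on_exp hg) //;
  try exact: image_exp.
elim: j => [|j IHj]; first by rewrite !expr0 !mulr1.
by rewrite !exprSr !mulrA IHj mulrAC -fy fyz fy mulrAC.
Qed.

Lemma in_strict_closure q : (exists r, R r /\ exists d : nat -> {poly k},
    q = r + \sum_(2 <= i < l) (map_poly (in_alg Q) (d i)).[x] * y ^+ i / x ^+ ((i - 1) * n)) ->
  strict_closure R S q.
Proof.
case=> r [Rr [d ->]]; apply: strict_closureD.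
  exact: (strict_closure_base (phi := evXY x z) R_sub_S).
rewrite (eq_big_nat _ _ (F2 := fun i => horner_alg x (d i) * (y * z ^+ (i - 1)))); last first.
  by move=> i /andP[i_ge2 _]; rewrite -mulrA y_exp_div_x_exp // ltnW.
apply: strict_closure_sum => i; apply: strict_closureM; last exact: strict_closure_yz_exp.
by apply: (strict_closure_base R_sub_S); exists (d i)%:P; rewrite evXYC.
Qed.

Lemma evXYz_expand P : evXY x z P = \sum_(0 <= i < l) horner_alg x P`_i * z ^+ i.
Proof.
rewrite (evXY_sum _ _ (leq_maxl (size P) l)).
rewrite -(big_mkord xpredT (fun i => horner_alg x P`_i * z ^+ i)).
rewrite (big_cat_nat (leq0n l) (leq_maxr _ _)) /= [X in _ + X]big1_seq ?addr0 //.
by move=> i /andP[_]; rewrite mem_index_iota => /andP[l_le _]; rewrite z_exp_eq0 // mulr0.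
Qed.

Lemma strict_closure_trunc P :
  strict_closure R S (evXY x z P) -> trunc k n l P = trunc0 k n l P.
Proof.
case=> _ fgP.
have ker_trunc P' : evXY x z P' = 0 -> trunc k n l P' = 0.
  by move/evXYz_eq0; apply: trunc_eq0.
have ker_trunc0 P' : evXY x z P' = 0 -> trunc0 k n l P' = 0.
  by move/evXYz_eq0/(_ 0 l_gt0); apply: trunc0_eq0.
rewrite -(descendE ker_trunc) -(descendE ker_trunc0).
apply: fgP; try exact: rhom_on_descend.
move=> _ [P' <-].
by rewrite -evXY_compXnX (descendE ker_trunc) (descendE ker_trunc0) trunc_compXnX.
Qed.

Lemma strict_closure_decomposition q : strict_closure R S q -> exists r, R r /\
  exists d : nat -> {poly k},
    q = r + \sum_(2 <= i < l) (map_poly (in_alg Q) (d i)).[x] * y ^+ i / x ^+ ((i - 1) * n).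
Proof.
move=> Rq; have [[P Pq] _] := Rq; move: Rq; rewrite -{}Pq.
move=> /strict_closure_trunc/trunc_eq_trunc0 => /(_ n_gt0 l_gt0) XnP.
have P_eq i : (0 < i < l)%N ->
    horner_alg x P`_i = horner_alg x (drop_poly n P`_i) * x ^+ n.
  move=> /XnP Pi; rewrite -{1}(poly_take_drop n P`_i) Pi add0r.
  by rewrite rmorphM rmorphXn /= horner_algX.
exists (horner_alg x P`_0 + horner_alg x (drop_poly n P`_1) * y); split.
  by exists ((P`_0)%:P + (drop_poly n P`_1)%:P * 'X); rewrite rmorphD rmorphM !evXYC evXYX.
exists (fun i => drop_poly n P`_i).
rewrite evXYz_expand big_ltn // big_ltn // expr0 mulr1 expr1 addrA.
congr (_ + _ + _); first by rewrite P_eq // -mulrA -y_eq.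
apply: eq_big_nat => i /andP[i_ge2 i_lt]; have i_gt0 := ltnW i_ge2.
by rewrite P_eq ?i_gt0 // -!mulrA y_exp_div_x_exp // y_eq -mulrA -exprS subn1 prednK.
Qed.

End StrictClosureOfTruncatedPlane.

Theorem mainTheorem9 (k : fieldType) (Q : comUnitAlgType k) (x y : Q) (l : nat)
  (hl : (3 <= l)%N)
  (hker : forall P : {poly {poly k}},
            evalXY x y P = 0 <-> exists P0 : {poly {poly k}}, P = P0 * 'X^l)
  (hQ : is_total_quotient_ring (gen2 x y))
  (n : nat) (hn : (0 < n)%N) :
  let R := gen2 x y in
  let z := y / x ^+ n in
  let S := gen2 x z in
  (forall q, R q -> S q) /\
  (forall q, S q -> integral_over R q) /\
  (forall q, strict_closure R S q <->
     exists r, R r /\ exists d : nat -> {poly k},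
       q = r + \sum_(2 <= i < l) (map_poly (in_alg Q) (d i)).[x] * y ^+ i / x ^+ ((i - 1) * n)).
Proof.
split; first exact: R_sub_S hker hQ.
split; first exact: S_integral hker.
move=> q; split; first exact: (strict_closure_decomposition (n := n) hl hn hker hQ).
exact: (in_strict_closure (n := n) hker hQ).
Qed.
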